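(* In the Riemann problem setting of the context, assume the initial data generate a left shock and a right shock, i.e. $p_*>p_L$ and $p_*>p_R$. Then for all $K,M\in\{L,R\}$: $$|u_*-u_K|<|[\![u]\!]|,\qquad0<p_*-p_K<\big(\gamma\rho_K|[\![u]\!]|+\rho_Ka_K\big)|[\![u]\!]|,$$ $$|\rho_{*K}-\rho_M|<a_K^{-2}\big(\gamma\rho_K|[\![u]\!]|+\rho_Ka_K\big)|[\![u]\!]|+|[\![\rho]\!]|.$$
   Context: Let $\gamma\in(1,2]$. Consider the one-dimensional Riemann problem for the complete Euler equations with left and right primitive states $V_K=(\rho_K,u_K,p_K)$, $\rho_K,p_K>0$, $K=L,R$, sound speeds $a_K=\sqrt{\gamma p_K/\rho_K}$, and jumps $[\![\rho]\!]=\rho_R-\rho_L$, $[\![u]\!]=u_R-u_L$, $[\![p]\!]=p_R-p_L$. For $K=L,R$ define $f_K(p)=(p-p_K)\big(\frac{A_K}{p+B_K}\big)^{1/2}$ if $p>p_K$ and $f_K(p)=\frac{2a_K}{\gamma-1}\big[(p/p_K)^{\frac{\gamma-1}{2\gamma}}-1\big]$ if $p\le p_K$, with $A_K=\frac2{(\gamma+1)\rho_K}$, $B_K=\frac{\gamma-1}{\gamma+1}p_K$. The star pressure $p_*$ solves $f_L(p_* )+f_R(p_* )+u_R-u_L=0$ and $u_*=u_L-f_L(p_* )=u_R+f_R(p_* )$. The $K$-wave is a rarefaction if $p_*\le p_K$, a shock if $p_*>p_K$. The density on the $K$-side of the contact is $\rho_{*K}=\rho_K(p_*/p_K)^{1/\gamma}$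 for a rarefaction and $\rho_{*K}=\rho_K\frac{p_*/p_K+\frac{\gamma-1}{\gamma+1}}{\frac{\gamma-1}{\gamma+1}p_*/p_K+1}$ for a shock. *)

From Stdlib Require Import Reals.
Open Scope R_scope.

Record state := mkState { rho : R; vel : R; pres : R }.

Inductive side := Lside | Rside.

Definition pick (K : side) (VL VR : state) : state :=
  match K with Lside => VL | Rside => VR end.

Definition sound (gamma : R) (V : state) : R := sqrt (gamma * pres V / rho V).

Definition Acoef (gamma : R) (V : state) : R := 2 / ((gamma + 1) * rho V).
Definition Bcoef (gamma : R) (V : state) : R := (gamma - 1) / (gamma + 1) * pres V.

(* Toro's pressure function f_K *)
Definition fK (gamma : R) (V : state) (p : R) : R :=
  if Rlt_dec (pres V) p
  then (p - pres V) * sqrt (Acoef gamma V / (p + Bcoef gamma V))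
  else 2 * sound gamma V / (gamma - 1) *
       (Rpower (p / pres V) ((gamma - 1) / (2 * gamma)) - 1).

(* density on the K-side of the contact *)
Definition rho_star (gamma : R) (V : state) (pstar : R) : R :=
  if Rle_dec pstar (pres V)
  then rho V * Rpower (pstar / pres V) (1 / gamma)
  else rho V * (pstar / pres V + (gamma - 1) / (gamma + 1)) /
       ((gamma - 1) / (gamma + 1) * (pstar / pres V) + 1).

(* Across a shock, write x = p_star - p_K and f = f_K(p_star).  The Rankine-Hugoniot
   relation gives rho_K f^2 ((gamma+1) x + 2 gamma p_K) = 2 x^2, and together
   with rho_K a_K^2 = gamma p_K this yields x^2 <= gamma rho_K f^2 x + (rho_K a_K f)^2,
   hence x <= (gamma rho_K f + rho_K a_K) f.  For two shocks f_L, f_R > 0 and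
   |[u]| = f_L + f_R, so f_K < |[u]| and every bound follows by monotonicity.
   The density jump rho_*K - rho_K is positive and smaller than x / a_K^2. *)

From Stdlib Require Import Reals Lra Psatz.
Open Scope R_scope.

Lemma le_add_of_sqr_le (x c s : R) :
  0 < x -> 0 <= c -> 0 <= s -> x ^ 2 <= c * x + s ^ 2 -> x <= c + s.
Proof. intros Hx Hc Hs Hsq; destruct (Rle_lt_dec x s); nra. Qed.

Lemma fK_shock (gamma : R) (V : state) (p : R) : pres V < p ->
  fK gamma V p = (p - pres V) * sqrt (Acoef gamma V / (p + Bcoef gamma V)).
Proof. intro Hp; unfold fK; destruct (Rlt_dec (pres V) p); [reflexivity | lra]. Qed.

Section Shock.

Variables (gamma : R) (V : state) (p : R).
Hypotheses (Hgamma : 1 < gamma) (Hrho : 0 < rho V) (Hpres : 0 < pres V)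
  (Hshock : pres V < p).

Let a := sound gamma V.
Let f := fK gamma V p.

Lemma sound_sqr : a ^ 2 * rho V = gamma * pres V.
Proof.
  unfold a, sound; rewrite <- Rsqr_pow2, Rsqr_sqrt; [field; lra |].
  apply Rlt_le, Rdiv_lt_0_compat; nra.
Qed.

Lemma sound_pos : 0 < a.
Proof. apply sqrt_lt_R0, Rdiv_lt_0_compat; nra. Qed.

Lemma Bcoef_shock_pos : 0 < p + Bcoef gamma V.
Proof.
  unfold Bcoef.
  assert (0 < (gamma - 1) / (gamma + 1)) by (apply Rdiv_lt_0_compat; lra).
  nra.
Qed.

Lemma fK_shock_pos : 0 < f.
Proof.
  unfold f; rewrite fK_shock by exact Hshock.
  apply Rmult_lt_0_compat; [lra |].
  apply sqrt_lt_R0, Rdiv_lt_0_compat; [| exact Bcoef_shock_pos].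
  unfold Acoef; apply Rdiv_lt_0_compat; nra.
Qed.

Lemma fK_shock_sqr :
  rho V * f ^ 2 * ((gamma + 1) * (p - pres V) + 2 * gamma * pres V) =
  2 * (p - pres V) ^ 2.
Proof.
  pose proof Bcoef_shock_pos.
  unfold f; rewrite fK_shock by exact Hshock.
  rewrite Rpow_mult_distr, <- (Rsqr_pow2 (sqrt _)), Rsqr_sqrt.
  - unfold Acoef, Bcoef; field; repeat split; nra.
  - apply Rlt_le, Rdiv_lt_0_compat; [unfold Acoef; apply Rdiv_lt_0_compat |]; nra.
Qed.

Lemma shock_pressure_jump_le :
  p - pres V <= (gamma * rho V * f + rho V * a) * f.
Proof.
  pose proof fK_shock_sqr as Hf. pose proof sound_sqr as Ha.
  pose proof fK_shock_pos. pose proof sound_pos.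
  replace ((gamma * rho V * f + rho V * a) * f)
    with (gamma * rho V * f ^ 2 + rho V * a * f) by ring.
  apply le_add_of_sqr_le; try lra.
  - apply Rmult_le_pos; [| apply pow2_ge_0]; nra.
  - apply Rmult_le_pos; [| lra]; nra.
  - (* (rho a f)^2 = gamma rho f^2 p_K, and 2 gamma (x + p_K) >= (gamma+1) x + 2 gamma p_K *)
    replace ((rho V * a * f) ^ 2) with (rho V * f ^ 2 * (a ^ 2 * rho V)) by ring.
    rewrite Ha.
    assert (0 <= rho V * f ^ 2 * ((gamma - 1) * (p - pres V))).
    { apply Rmult_le_pos; [apply Rmult_le_pos; [lra | apply pow2_ge_0] | nra]. }
    nra.
Qed.

Lemma shock_pressure_jump_lt (F : R) :
  f < F -> p - pres V < (gamma * rho V * F + rho V * a) * F.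
Proof.
  intro HF; pose proof fK_shock_pos; pose proof sound_pos.
  eapply Rle_lt_trans; [exact shock_pressure_jump_le |].
  assert (0 < rho V * a) by nra.
  assert (gamma * rho V * f * f < gamma * rho V * F * F).
  { rewrite !Rmult_assoc; apply Rmult_lt_compat_l; [lra |].
    apply Rmult_lt_compat_l; [lra |]. nra. }
  nra.
Qed.

Lemma rho_star_shock :
  rho_star gamma V p - rho V =
  2 * rho V * (p - pres V) / ((gamma - 1) * p + (gamma + 1) * pres V).
Proof.
  unfold rho_star; destruct (Rle_dec p (pres V)); [lra |].
  field; repeat split; nra.
Qed.

Lemma rho_star_shock_pos : 0 < rho_star gamma V p - rho V.
Proof. rewrite rho_star_shock; apply Rdiv_lt_0_compat; nra. Qed.

Lemma rho_star_shock_lt (B : R) :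
  p - pres V <= B -> rho_star gamma V p - rho V < / a ^ 2 * B.
Proof.
  intro HB; pose proof sound_sqr as Ha; pose proof sound_pos.
  apply Rlt_le_trans with ((p - pres V) / a ^ 2).
  - rewrite rho_star_shock.
    replace ((p - pres V) / a ^ 2)
      with (2 * rho V * (p - pres V) / (2 * (gamma * pres V))).
    2: { rewrite <- Ha; field; split; lra. }
    unfold Rdiv; apply Rmult_lt_compat_l; [nra |].
    (* 2 gamma p_K < (gamma - 1) p + (gamma + 1) p_K, i.e. (gamma - 1) (p - p_K) > 0 *)
    apply Rinv_lt_contravar; [apply Rmult_lt_0_compat |]; nra.
  - unfold Rdiv; rewrite Rmult_comm; apply Rmult_le_compat_l; [| exact HB].
    apply Rlt_le, Rinv_0_lt_compat, pow_lt; lra.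
Qed.

End Shock.

Lemma Rabs_rho_pick_le (K M : side) (VL VR : state) :
  Rabs (rho (pick K VL VR) - rho (pick M VL VR)) <= Rabs (rho VR - rho VL).
Proof.
  destruct K, M; simpl; rewrite ?Rminus_diag, ?Rabs_R0;
    try apply Rabs_pos; rewrite ?(Rabs_minus_sym (rho VL)); lra.
Qed.

Theorem lemma3p5 (gamma : R) (VL VR : state) (pstar : R) :
  1 < gamma <= 2 ->
  0 < rho VL -> 0 < pres VL -> 0 < rho VR -> 0 < pres VR ->
  fK gamma VL pstar + fK gamma VR pstar + vel VR - vel VL = 0 ->
  pstar > pres VL -> pstar > pres VR ->
  let ustar := vel VL - fK gamma VL pstar in
  let du := vel VR - vel VL in
  let drho := rho VR - rho VL in
  forall K M : side,
    let VK := pick K VL VR in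
    let VM := pick M VL VR in
    let bound := (gamma * rho VK * Rabs du + rho VK * sound gamma VK) * Rabs du in
    Rabs (ustar - vel VK) < Rabs du /\
    0 < pstar - pres VK /\ pstar - pres VK < bound /\
    Rabs (rho_star gamma VK pstar - rho VM) < / (sound gamma VK ^ 2) * bound + Rabs drho.
Proof.
  intros Hg HrL HpL HrR HpR Hstar HL HR ustar du drho K M VK VM bound.
  pose proof (fK_shock_pos gamma VL pstar ltac:(lra) HrL HpL HL) as HfL.
  pose proof (fK_shock_pos gamma VR pstar ltac:(lra) HrR HpR HR) as HfR.
  assert (Hdu : Rabs du = fK gamma VL pstar + fK gamma VR pstar).
  { unfold du; rewrite Rabs_left; lra. }
  assert (HK : 0 < rho VK /\ 0 < pres VK /\ pres VK < pstar /\
               Rabs (ustar - vel VK) = fK gamma VK pstar /\ fK gamma VK pstar < Rabs du).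
  { unfold VK, ustar; destruct K; simpl;
      [rewrite Rabs_left | rewrite Rabs_right]; repeat split; lra. }
  destruct HK as (Hr & Hp & Hs & Hu & Hf).
  assert (Hbound : pstar - pres VK < bound)
    by exact (shock_pressure_jump_lt gamma VK pstar ltac:(lra) Hr Hp Hs _ Hf).
  pose proof (rho_star_shock_pos gamma VK pstar ltac:(lra) Hr Hp Hs).
  pose proof (rho_star_shock_lt gamma VK pstar ltac:(lra) Hr Hp Hs _ (Rlt_le _ _ Hbound)).
  assert (HKM : Rabs (rho VK - rho VM) <= Rabs drho) by exact (Rabs_rho_pick_le K M VL VR).
  repeat split; [lra | lra | exact Hbound |].
  replace (rho_star gamma VK pstar - rho VM)
    with ((rho_star gamma VK pstar - rho VK) + (rho VK - rho VM)) by ring.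
  eapply Rle_lt_trans; [apply Rabs_triang |].
  rewrite Rabs_right by lra.
  lra.
Qed.
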